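(* The map $\mu$ defined in the context is a probability kernel from $\mathsf{X}$ to $\mathsf{X}$; that is, $\mu(\cdot,B)$ is Borel measurable on $\mathsf{X}$ for every Borel $B\subseteq\mathsf{X}$, and $\mu(\mathsf{x},\cdot)$ is a probability measure on the Borel sets of $\mathsf{X}$ for every $\mathsf{x}\in\mathsf{X}$.
   Context: Fix $\theta_a,\theta_d>0$, positive integers $n,N$, $E=\mathbb{R}^N$, and a Borel probability measure $\eta$ on $E$ with finite mean. For a positive integer $k$, $[k]=\{0,\dots,k-1\}$. Elements of $\{0,1\}^{[n]}$ and $E^{[n+1]}$ are functions; $|\psi|=\sum_{i\in[n]}\psi(i)$. The state space is $\mathsf{X}=\{(\psi,\mathbf{v})\in\{0,1\}^{[n]}\times E^{[n+1]}:\sum_{i\in[n]}\psi(i)(\mathbf{v}(i)-\mathbf{v}(n))=0\}$ with the subspace topology of the product topology (discrete on $\{0,1\}$, Euclidean on $E$). For $i\in[n]$: $r_i(\psi)=\frac{\theta_d\psi(i)+\theta_a(1-\psi(i))}{\theta_d|\psi|+\theta_a(n-|\psi|)}$, and $s_i(\psi)$ agrees with $\psi$ except $s_i(\psi)(i)=1-\psi(i)$. For $\mathsf{x}=(\psi,\mathbf{v})\in\mathsf{X}$ and $i\in[n]$, let $\lambda_i^{\mathsf{x}}$ be the Borel measure on $\{0,1\}^{[n]}\times E^{[n+1]}$ given as the law of $(s_i(\psi),\mathbf{w})$, where $\mathbf{w}(j)=\mathbf{v}(j)$ for $j\in[n]\setminus\{i\}$ and $(\mathbf{w}(i),\mathbf{w}(n))$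 equals: $(\mathbf{v}(i),\mathbf{v}(n))$ if $|\psi|=\psi(i)=1$; $(\mathbf{v}(i),\mathbf{v}(n)-\frac{\mathbf{v}(i)-\mathbf{v}(n)}{|\psi|-1})$ if $|\psi|>\psi(i)=1$; $(\mathbf{x}+\mathbf{v}(n),\frac{\mathbf{x}}{|\psi|+1}+\mathbf{v}(n))$ with $\mathbf{x}\sim\eta$ if $\psi(i)=0$. Define $\mu(\mathsf{x},B)=\sum_{i\in[n]}r_i(\psi)\lambda_i^{\mathsf{x}}(B)$ for Borel sets $B\subseteq\mathsf{X}$ (i.e. the restriction of $\sum_i r_i(\psi)\lambda_i^{\mathsf{x}}$ to Borel subsets of $\mathsf{X}$). *)

From HB Require Import structures.
From mathcomp Require Import all_boot all_order all_algebra.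
From mathcomp Require Import all_classical all_reals all_analysis measurable_realfun.
Set Implicit Arguments. Unset Strict Implicit. Unset Printing Implicit Defensive.
Import Order.TTheory GRing.Theory Num.Theory.
Import numFieldNormedType.Exports.
Local Open Scope classical_set_scope.
Local Open Scope ring_scope.

Section Model.
Variables (R : realType) (n N : nat).

Definition Evec := 'rV[R]_N.
Definition Eborel := g_sigma_algebraType (@open 'rV[R]_N).

Definition Psi := prod_topology (fun _ : 'I_n => bool).
Definition Vs := prod_topology (fun _ : 'I_n.+1 => 'rV[R]_N).
Definition Amb := (Psi * Vs)%type.

(** index i in [n] seen inside [n+1]; index n is ord_max *)
Definition vidx (i : 'I_n) : 'I_n.+1 := widen_ord (leqnSn n) i.

Definition card_psi (psi : Psi) : nat := (\sum_(i < n) psi i)%N.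

Definition inX : set Amb :=
  [set x : Amb | \sum_(i < n) ((nat_of_bool (x.1 i))%:R : R) *: (x.2 (vidx i) - x.2 ord_max) = 0].

Definition XBorel : set (set Amb) := <<s inX, [set inX `&` U | U in @open Amb] >>.

Definition rate (ta td : R) (psi : Psi) (i : 'I_n) : R :=
  (if psi i then td else ta) /
  (td * (card_psi psi)%:R + ta * (n - card_psi psi)%:R).

Definition flip (psi : Psi) (i : 'I_n) : Psi :=
  fun j => if j == i then ~~ psi i else psi j.

Definition upd (v : Vs) (i : 'I_n) (a b : 'rV[R]_N) : Vs :=
  fun j => if j == ord_max then b else if j == vidx i then a else v j.

(** lambda_i^x(B): law of (s_i(psi), w) *)
Definition lam (eta : set Eborel -> \bar R) (x : Amb) (i : 'I_n)
    (B : set Amb) : \bar R :=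
  let psi := x.1 in let v := x.2 in let k := card_psi psi in
  if psi i then
    if k == 1%N then
      ((\1_B ((flip psi i, upd v i (v (vidx i)) (v ord_max)) : Amb) : R))%:E
    else
      ((\1_B ((flip psi i,
         upd v i (v (vidx i))
           (v ord_max - (k.-1)%:R^-1 *: (v (vidx i) - v ord_max))) : Amb) : R))%:E
  else
    eta [set y : Eborel | B ((flip psi i,
         upd v i ((y : 'rV[R]_N) + v ord_max)
                 ((k.+1)%:R^-1 *: (y : 'rV[R]_N) + v ord_max)) : Amb)].

Definition mu (ta td : R) (eta : set Eborel -> \bar R) (x : Amb)
    (B : set Amb) : \bar R :=
  (\sum_(i < n) (rate ta td x.1 i)%:E * lam eta x i B)%E.

End Model.

Definition measurable_on {T} {R : realType} (D : set T) (S : set (set T))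
    (f : T -> \bar R) : Prop :=
  forall A : set (\bar R), measurable A -> S (D `&` f @^-1` A).

Definition probability_on {T} {R : realType} (D : set T) (S : set (set T))
    (m : set T -> \bar R) : Prop :=
  [/\ m set0 = 0%E,
      (forall A, S A -> (0 <= m A)%E),
      (forall F : (set T)^nat, (forall k, S (F k)) -> trivIset setT F ->
          (fun k => (\sum_(0 <= j < k) m (F j))%E) @ \oo --> m (\bigcup_k F k))
    & m D = 1%E].

From Pilot Require Import Defs.
From HB Require Import structures.
From mathcomp Require Import all_boot all_order all_algebra.
From mathcomp Require Import all_classical all_reals all_analysis measurable_realfun.
From mathcomp Require Import ring lra.
Set Implicit Arguments. Unset Strict Implicit. Unset Printing Implicit Defensive.
Import Order.TTheory GRing.Theory Num.Theory.
Import numFieldNormedType.Exports.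
Local Open Scope classical_set_scope.
Local Open Scope ring_scope.

(* Write J_i(x, y) for the state reached from x by the i-th move when the
   displacement drawn from eta is y (y is ignored when particle i is
   deactivated).  Then lambda_i^x is the image of eta under J_i(x, .), so
   mu(x, .) is a convex combination of images of a probability measure.  J_i
   keeps v(n) the barycentre of the active positions, hence maps X into X, and
   each image has full mass on X.  For measurability in x: J_i is jointly
   continuous, since psi ranges over a discrete space, and the open sets of the
   second countable space {0,1}^[n] x E^[n+1] x E are countable unions of open
   rectangles; so preimages under J_i of Borel subsets of X are
   product-measurable, and x |-> eta(section at x) is measurable by the section
   lemma behind Fubini's theorem. *)

Section box_neighbourhoods.
Context (I : eqType) (K : I -> topologicalType).

Lemma nbhs_prod_exists_box (f : prod_topology K) (A : set (prod_topology K)) :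
  nbhs f A -> exists2 U : forall i, set (K i),
    (forall i, nbhs (f i) (U i)) & [set g | forall i, U i (g i)] `<=` A.
Proof.
pose F := [set B : set (prod_topology K) | exists2 U : forall i, set (K i),
    (forall i, nbhs (f i) (U i)) & [set g | forall i, U i (g i)] `<=` B].
have FF : Filter F.
  constructor.
  - by exists (fun _ => setT) => // i; exact: filterT.
  - move=> P Q [U HU sU] [V HV sV]; exists (fun i => U i `&` V i).
      by move=> i; apply: filterI.
    by move=> g Hg; split; [apply: sU => i; case: (Hg i)|apply: sV => i; case: (Hg i)].
  - by move=> P Q PQ [U HU sU]; exists U => //; apply: subset_trans PQ.
suff : cvg_to F (nbhs f) by move=> /(_ A); apply.
apply/cvg_sup => i B [W [[A1 oA1 AW] Wf] WB].
exists (dfwith (fun j => setT) i A1).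
  move=> j; have [->|ji] := eqVneq j i.
    by rewrite dfwithin; apply: open_nbhs_nbhs; split => //; move: Wf; rewrite -AW.
  by rewrite dfwithout 1?eq_sym //; exact: filterT.
by move=> g Hg; apply: WB; rewrite -AW /=; have := Hg i; rewrite dfwithin.
Qed.

End box_neighbourhoods.

Section finite_products.
Context (I : finType) (K : I -> topologicalType).

Lemma nbhs_prod_box (f : prod_topology K) (U : forall i, set (K i)) :
  (forall i, nbhs (f i) (U i)) -> nbhs f [set g | forall i, U i (g i)].
Proof.
move=> fU.
apply: (@filter_forall _ I (fun i (g : prod_topology K) => U i (g i)) _ (nbhs_filter f))
  => i.
exact: (@proj_continuous I K i f _ (fU i)).
Qed.

Lemma continuous_prod (T : topologicalType) (h : T -> prod_topology K) :
  (forall i, continuous (h^~ i)) -> continuous h.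
Proof.
move=> hc z A /= /nbhs_prod_exists_box[U hU UA].
apply: (@filterS _ _ _ [set w | forall i, U i (h w i)]) => [w Uw|]; first exact: UA.
apply: (@filter_forall _ I (fun i w => U i (h w i)) _ (nbhs_filter z)) => i.
exact: (hc i z _ (hU i)).
Qed.

End finite_products.

Lemma nbhs_prod_discrete_set1 (I : finType) (T : discreteTopologicalType)
    (f : {ptws I -> T}) :
  nbhs f [set f].
Proof.
have := @nbhs_prod_box I (fun=> T) f (fun i => [set f i]) (fun i => discrete_set1 (f i)).
by apply: (filterS (F := nbhs f)) => g gf; apply/funext.
Qed.

Lemma continuous_discrete_cases (S T U : topologicalType) (p : S -> T)
    (h : T -> S -> U) :
  (forall t : T, nbhs t [set t]) -> continuous p -> (forall t, continuous (h t)) ->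
  continuous (fun s => h (p s) s).
Proof.
move=> discrT pc hc s A /= hA.
have ps : nbhs s (p @^-1` [set p s]) by exact: pc.
by apply: filterS (filterI ps (hc _ _ _ hA)) => w /= [->].
Qed.

Definition open_basis {T : topologicalType} {I : Type} (B : I -> set T) :=
  (forall i, open (B i)) /\ (forall x A, nbhs x A -> exists2 i, B i x & B i `<=` A).

Lemma open_bigcup_basis (T : topologicalType) (I : Type) (B : I -> set T) (W : set T) :
  open_basis B -> open W -> W = \bigcup_(i in [set i | B i `<=` W]) B i.
Proof.
move=> [_ Bbasis] oW; apply/seteqP; split=> [x Wx|x [i /= BW /BW] //].
have [i Bix BiW] := Bbasis x W (open_nbhs_nbhs (conj oW Wx)).
by exists i.
Qed.

Lemma open_basis_discrete (T : discreteTopologicalType) :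
  open_basis (fun x : T => [set x]).
Proof.
split=> [x|x A /nbhs_singleton Ax]; first exact: discrete_open.
by exists x => // _ ->.
Qed.

Lemma open_basis_prod (T1 T2 : topologicalType) (I1 I2 : Type)
    (B1 : I1 -> set T1) (B2 : I2 -> set T2) :
  open_basis B1 -> open_basis B2 ->
  open_basis (fun k : I1 * I2 => B1 k.1 `*` B2 k.2).
Proof.
move=> [oB1 B1basis] [oB2 B2basis]; split=> [k|x A].
  rewrite openE => x [Bx1 Bx2]; exists (B1 k.1, B2 k.2) => //=.
  by split; apply: open_nbhs_nbhs; split; [exact: oB1|done|exact: oB2|done].
case=> -[A1 A2] /= [xA1 xA2] sA.
have [i1 Bx1 BA1] := B1basis _ _ xA1; have [i2 Bx2 BA2] := B2basis _ _ xA2.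
by exists (i1, i2) => // y [/BA1 ? /BA2 ?]; apply: sA.
Qed.

Lemma open_basis_finprod (I : finType) (T : topologicalType) (J : Type)
    (B : J -> set T) :
  open_basis B ->
  open_basis (fun phi : {ffun I -> J} =>
    [set f : {ptws I -> T} | forall i, B (phi i) (f i)]).
Proof.
move=> [oB Bbasis]; split=> [phi|f A fA].
  rewrite (@openE {ptws I -> T}) => f Bf.
  apply: (@nbhs_prod_box _ (fun=> T) f (fun i => B (phi i))) => i.
  by apply: open_nbhs_nbhs; split; [exact: oB|exact: Bf].
have [U fU UA] := @nbhs_prod_exists_box _ (fun=> T) f A fA.
pose j i := cid2 (Bbasis _ _ (fU i)).
exists [ffun i => s2val (j i)] => [i|g Bg]; first by rewrite ffunE; exact: (s2valP (j i)).
by apply: UA => i; apply: (s2valP' (j i)); have := Bg i; rewrite ffunE.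
Qed.

Lemma open_basis_rV (R : realType) (N : nat) :
  open_basis (fun k : 'rV[rat]_N * nat => ball (map_mx ratr k.1 : 'rV[R]_N) k.2.+1%:R^-1).
Proof.
split=> [k|x A /nbhs_ballP[e e0 eA]]; first exact: ball_open.
have [m _ /(_ m (leqnn m)) me] :=
  near_infty_natSinv_lt (PosNum (divr_gt0 e0 (ltr0n _ 2))).
have r0 : 0 < m.+1%:R^-1 :> R by rewrite invr_gt0 ltr0n.
have /choice[c cx] : forall x : R, exists q : rat, `|ratr q - x| < m.+1%:R^-1.
  move=> y; have /rat_in_itvoo[q] : y < y + m.+1%:R^-1 by rewrite ltrDl.
  rewrite in_itv /= => /andP[yq qy]; exists q.
  by rewrite ltr_distl qy andbT (lt_trans _ yq) // ltrBlDr ltrDl.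
have xc : ball x m.+1%:R^-1 (map_mx ratr (map_mx c x)).
  by split=> // i j; rewrite /ball /= !mxE distrC.
exists (map_mx c x, m) => [|y /(ball_triangle xc) xy]; first exact: ball_sym.
by apply/eA/(le_ball _ xy); rewrite [e in _ <= e](splitr e) ltW // ltrD.
Qed.

Lemma continuous_pair (S T U : topologicalType) (f : S -> T) (g : S -> U) :
  continuous f -> continuous g -> continuous (fun s => (f s, g s)).
Proof. by move=> fc gc s; exact: (cvg_pair (fc s) (gc s)). Qed.

Lemma sigma_algebra_trace_preimage (T : Type) (D : set T) (S : set (set T)) :
  sigma_algebra D S -> sigma_algebra setT [set A | S (D `&` A)].
Proof.
move=> [S0 SC SU]; split=> [|A|F SF] /=; first by rewrite setI0.
  by rewrite setTD -setDE => /SC; rewrite setDIr setDv set0U.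
by rewrite setI_bigcupr; exact: SU.
Qed.

Section model.
Variables (R : realType) (n N : nat).
Local Notation Amb := (Amb R n N).
Local Notation Psi := (Psi n).
Local Notation Vs := (Vs R n N).
Local Notation inX := (@inX R n N).
Local Notation XBorel := (@XBorel R n N).
Local Notation E := (Eborel R N).

(* Measurable types of the library carry a sigma-algebra on the whole type, so
   [Amb] is equipped with the sets whose trace on X is Borel. *)
Definition Xmeasurable : set (set Amb) := [set A | XBorel (inX `&` A)].
Definition AmbX := g_sigma_algebraType Xmeasurable.

Lemma measurable_AmbXE (A : set AmbX) : measurable A <-> XBorel (inX `&` A).
Proof.
rewrite /measurable /= sigma_algebra_id //.
exact/sigma_algebra_trace_preimage/smallest_sigma_algebra.
Qed.

Lemma open_measurable_AmbX (A : set Amb) : open A -> measurable (A : set AmbX).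
Proof. by move=> oA; apply/measurable_AmbXE; apply: sub_sigma_algebra; exists A. Qed.

Lemma open_measurable_Eborel (A : set 'rV[R]_N) : open A -> measurable (A : set E).
Proof. exact: sub_sigma_algebra. Qed.

Lemma open_measurable_prod (W : set (Amb * 'rV[R]_N)) :
  open W -> measurable (W : set (AmbX * E)).
Proof.
move=> oW.
have basisAmb := open_basis_prod (open_basis_finprod 'I_n (open_basis_discrete bool))
  (open_basis_finprod 'I_n.+1 (open_basis_rV R N)).
have basis := open_basis_prod basisAmb (open_basis_rV R N).
rewrite (open_bigcup_basis basis oW) bigcup_mkcond.
apply: countable_bigcupT_measurable => [|k]; first exact: countableP.
case: ifPn => _ //.
apply: measurableX; first exact: open_measurable_AmbX (basisAmb.1 k.1).
exact: open_measurable_Eborel (ball_open _ _).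
Qed.

Lemma XBorel_inX : XBorel inX.
Proof.
rewrite /Defs.XBorel -[X in <<s _, _ >> X]setD0.
by apply: sigma_algebraCD; exact: sigma_algebra0.
Qed.

Lemma measurable_inX : measurable (inX : set AmbX).
Proof. by apply/measurable_AmbXE; rewrite setIid; exact: XBorel_inX. Qed.

Lemma measurable_preimage_XBorel (H : Amb * 'rV[R]_N -> Amb) :
  continuous H -> (forall z, inX z.1 -> inX (H z)) ->
  forall B, XBorel B -> measurable ((inX `*` setT) `&` H @^-1` B : set (AmbX * E)).
Proof.
move=> Hc HX; have mX : measurable (inX `*` setT : set (AmbX * E)).
  by apply: measurableX => //; exact: measurable_inX.
apply: smallest_sub; first split.
- by rewrite preimage_set0 setI0.
- move=> A mA.
  have -> : (inX `*` setT) `&` H @^-1` (inX `\` A) =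
            (inX `*` setT) `\` ((inX `*` setT) `&` H @^-1` A) :> set (AmbX * E).
    apply/seteqP; split=> z /= [Xz]; first by move=> [_ nA]; split=> // -[].
    by move=> nA; do 2!split=> //; [exact: HX Xz.1|move=> ?; exact: nA].
  exact: measurableD.
- by move=> F mF; rewrite preimage_bigcup setI_bigcupr; exact: bigcupT_measurable.
move=> _ [U oU <-]; rewrite preimage_setI setIA.
have -> : (inX `*` setT) `&` H @^-1` inX = inX `*` setT :> set (AmbX * E).
  by apply/setIidl => z [zX _]; exact: HX.
apply: measurableI => //; apply: open_measurable_prod.
by move/continuousP: Hc; apply.
Qed.

Lemma measurable_fun_psi (h : Psi -> \bar R) :
  measurable_fun setT (fun x : AmbX => h x.1).
Proof.
move=> _ A _; rewrite setTI; apply: open_measurable_AmbX.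
have /continuousP/(_ (h @^-1` A)) : continuous (@fst Psi Vs).
  by move=> ?; exact: cvg_fst.
apply; rewrite openE => psi Apsi; rewrite /interior.
have := @nbhs_prod_discrete_set1 'I_n bool psi.
by apply: filterS => _ ->.
Qed.

Definition jump (i : 'I_n) (x : Amb) (y : 'rV[R]_N) : Amb :=
  let psi := x.1 in let v := x.2 in let k := card_psi psi in
  (flip psi i,
   if psi i then
     if k == 1%N then upd v i (v (vidx i)) (v ord_max)
     else upd v i (v (vidx i)) (v ord_max - k.-1%:R^-1 *: (v (vidx i) - v ord_max))
   else upd v i (y + v ord_max) (k.+1%:R^-1 *: y + v ord_max)).

Lemma continuous_upd (T : topologicalType) (v : T -> Vs) (a b : T -> 'rV[R]_N) i :
  continuous v -> continuous a -> continuous b ->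
  continuous (fun t => upd (v t) i (a t) (b t)).
Proof.
move=> vc ac bc; apply: (@continuous_prod _ (fun=> 'rV[R]_N)) => j.
rewrite /upd; case: (j == ord_max) => //; case: (j == vidx i) => // t.
exact: (continuous_comp (vc t) (@proj_continuous _ (fun=> 'rV[R]_N) j (v t))).
Qed.

Lemma continuous_jump i : continuous (fun z : Amb * 'rV[R]_N => jump i z.1 z.2).
Proof.
have fst_c (T U : topologicalType) : continuous (@fst T U) by move=> ?; exact: cvg_fst.
have snd_c (T U : topologicalType) : continuous (@snd T U) by move=> ?; exact: cvg_snd.
have vc : continuous (fun z : Amb * 'rV[R]_N => z.1.2).
  by move=> z; exact: (continuous_comp (fst_c _ _ z) (snd_c _ _ z.1)).
have vjc j : continuous (fun z : Amb * 'rV[R]_N => z.1.2 j).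
  by move=> z; exact: (continuous_comp (vc z) (@proj_continuous _ (fun=> 'rV[R]_N) j _)).
apply: (@continuous_discrete_cases _ _ _ (fun z : Amb * 'rV[R]_N => z.1.1)
  (fun psi z => jump i (psi, z.1.2) z.2)).
- exact: nbhs_prod_discrete_set1.
- by move=> z; exact: (continuous_comp (fst_c _ _ z) (fst_c _ _ z.1)).
move=> psi; apply: continuous_pair => [z|]; first exact: (cvg_cst (flip psi i)).
rewrite [X in continuous X]/=.
case: (psi i); [case: (_ == _)|]; apply: continuous_upd => // w.
- exact: cvgB (vjc _ w) (cvgZ (cvg_cst _) (cvgB (vjc _ w) (vjc _ w))).
- exact: cvgD (snd_c _ _ w) (vjc _ w).
- exact: cvgD (cvgZ (cvg_cst _) (snd_c _ _ w)) (vjc _ w).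
Qed.

Lemma upd_vidx (v : Vs) i a b (j : 'I_n) :
  upd v i a b (vidx j) = if j == i then a else v (vidx j).
Proof.
rewrite /upd; have -> : (vidx j == vidx i) = (j == i) by rewrite -val_eqE.
by have -> : (vidx j == ord_max) = false
  by apply/negbTE; rewrite -val_eqE /= neq_ltn ltn_ord.
Qed.

Lemma upd_max (v : Vs) i a b : upd v i a b ord_max = b.
Proof. by rewrite /upd eqxx. Qed.

(* [inX x] is [centre_defect x = 0]: [x.2 ord_max] is the barycentre of the
   active positions. *)
Definition centre_defect (x : Amb) : 'rV[R]_N :=
  \sum_(i < n) (x.1 i)%:R *: (x.2 (vidx i) - x.2 ord_max).

Lemma centre_defect_flip_upd (psi : Psi) (v : Vs) i a b :
  centre_defect (flip psi i, upd v i a b) =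
  centre_defect (psi, v) + (card_psi psi)%:R *: (v ord_max - b)
  + (~~ psi i)%:R *: (a - b) - (psi i)%:R *: (v (vidx i) - b).
Proof.
pose S j := (psi j)%:R *: (v (vidx j) - b).
have shift : centre_defect (psi, v) + (card_psi psi)%:R *: (v ord_max - b) = \sum_j S j.
  rewrite /centre_defect /card_psi natr_sum scaler_suml -big_split /=.
  by apply: eq_bigr => j _; rewrite -scalerDr addrA subrK.
rewrite shift (bigD1 i) //= /centre_defect /= upd_max (bigD1 i) //= upd_vidx eqxx.
rewrite (addrC (S i)) (addrAC _ (S i)) addrK [RHS]addrC /flip eqxx; congr (_ + _).
by apply: eq_bigr => j /negbTE ji; rewrite upd_vidx ji.
Qed.

Lemma card_psi_gt0 (psi : Psi) i : psi i -> (0 < card_psi psi)%N.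
Proof. by move=> psi_i; rewrite /card_psi (bigD1 i) //= psi_i. Qed.

Lemma centre_defect_card1 (psi : Psi) (v : Vs) i : psi i -> card_psi psi = 1%N ->
  centre_defect (psi, v) = v (vidx i) - v ord_max.
Proof.
move=> psi_i; rewrite /card_psi (bigD1 i) //= psi_i add1n => -[] /eqP.
rewrite sum_nat_eq0 => /forallP off_i.
rewrite /centre_defect (bigD1 i) //= psi_i mulr1n scale1r big1 ?addr0 // => j ji.
by have := off_i j; rewrite ji; case: (psi j) => // _; rewrite scale0r.
Qed.

Lemma inX_jump i x y : inX x -> inX (jump i x y).
Proof.
change (centre_defect x = 0 -> centre_defect (jump i x y) = 0).
case: x => psi v /= c0; rewrite /jump /=.
case psi_i: (psi i); [case: eqP => k1|]; rewrite centre_defect_flip_upd c0 add0r.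
- move: c0; rewrite (centre_defect_card1 _ psi_i k1) k1 psi_i => /rowP c0.
  apply/rowP => l; have := c0 l; rewrite !mxE /=; lra.
- have k2 : (card_psi psi).-1%:R != 0 :> R.
    rewrite pnatr_eq0 -lt0n ltn_predRL ltn_neqAle (card_psi_gt0 psi_i) andbT.
    by rewrite eq_sym; apply/eqP.
  rewrite -[in X in X *: _](prednK (card_psi_gt0 psi_i)) -natr1 psi_i.
  by apply/rowP => l; rewrite !mxE /=; field.
- have k1 : (card_psi psi)%:R + 1 != 0 :> R by rewrite natr1 pnatr_eq0.
  rewrite -natr1 psi_i.
  by apply/rowP => l; rewrite !mxE /=; field.
Qed.

Section kernel.
Variables (ta td : R) (eta : probability E R).
Hypotheses (n_gt0 : (0 < n)%N) (ta_gt0 : 0 < ta) (td_gt0 : 0 < td).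

Lemma card_psi_le (psi : Psi) : (card_psi psi <= n)%N.
Proof.
rewrite -[X in (_ <= X)%N]card_ord -sum1_card.
by apply: leq_sum => i _; exact: leq_b1.
Qed.

Lemma sum_rate_weights (psi : Psi) :
  \sum_(i < n) (if psi i then td else ta) =
  td * (card_psi psi)%:R + ta * (n - card_psi psi)%:R.
Proof.
rewrite natrB ?card_psi_le // /card_psi natr_sum.
transitivity (\sum_(i < n) (ta + (td - ta) * (psi i)%:R)).
  by apply: eq_bigr => i _; case: (psi i); rewrite ?mulr1 ?mulr0 ?addr0 // addrC subrK.
rewrite big_split /= -big_distrr /= sumr_const card_ord -[ta *+ n]mulr_natr; ring.
Qed.

Lemma rate_ge0 (psi : Psi) i : 0 <= rate ta td psi i.
Proof.
rewrite /rate divr_ge0 //; first by case: ifP => _; exact: ltW.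
by rewrite addr_ge0 // mulr_ge0 // ltW.
Qed.

Lemma sum_rate (psi : Psi) : \sum_(i < n) rate ta td psi i = 1.
Proof.
rewrite /rate -mulr_suml sum_rate_weights divff // gt_eqF //.
have [k0|k0] := posnP (card_psi psi).
  by rewrite k0 mulr0 add0r subn0 mulr_gt0 // ltr0n.
by rewrite ltr_pwDl ?mulr_gt0 ?ltr0n // mulr_ge0 // ?ltW.
Qed.


Lemma probability_constant_set (U : Type) (S : set U) (u : U) :
  eta [set _ | S u] = (\1_S u)%:E.
Proof.
rewrite indicE; have [Su|nSu] := pselect (S u).
  have -> : [set _ : E | S u] = setT by apply/seteqP; split.
  by rewrite mem_set // probability_setT.
have -> : [set _ : E | S u] = set0 by apply/seteqP; split.
by rewrite memNset // measure0.
Qed.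

Lemma lamE (i : 'I_n) (x : Amb) (B : set Amb) : lam eta x i B = eta (jump i x @^-1` B).
Proof.
by rewrite /lam /jump /=; case: (x.1 i); [case: (_ == _)|] => //;
  rewrite probability_constant_set.
Qed.

Definition jump_preimage (i : 'I_n) (B : set Amb) : set (AmbX * E) :=
  (inX `*` setT) `&` (fun z => jump i z.1 z.2) @^-1` B.

Lemma measurable_jump_preimage (i : 'I_n) (B : set Amb) :
  XBorel B -> measurable (jump_preimage i B).
Proof.
apply: measurable_preimage_XBorel; first exact: continuous_jump.
by move=> z; exact: inX_jump.
Qed.

Lemma xsection_jump_preimage (i : 'I_n) (x : Amb) (B : set Amb) :
  inX x -> xsection (jump_preimage i B) x = jump i x @^-1` B.
Proof.
move=> xX; apply/seteqP; split=> y; rewrite /xsection /= in_setE //=.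
by case.
Qed.

Lemma measurable_lam (i : 'I_n) (B : set Amb) : XBorel B ->
  measurable_fun (inX : set AmbX) (fun x => lam eta x i B).
Proof.
move=> XB; apply: (@eq_measurable_fun _ _ _ _ _
  (fun x : AmbX => eta (xsection (jump_preimage i B) x))).
  by move=> x; rewrite inE => xX; rewrite xsection_jump_preimage // lamE.
exact: measurable_funS (measurable_fun_xsection _ (measurable_jump_preimage i XB)).
Qed.

Lemma lam_ge0 (i : 'I_n) (x : Amb) (B : set Amb) : (0 <= lam eta x i B)%E.
Proof. by rewrite lamE measure_ge0. Qed.

Lemma lam_sigma_additive (i : 'I_n) (x : Amb) (F : (set Amb)^nat) : inX x ->
  (forall k, XBorel (F k)) -> trivIset setT F ->
  (fun m => \sum_(0 <= k < m) lam eta x i (F k))%E @ \oo --> lam eta x i (\bigcup_k F k).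
Proof.
move=> xX XF tF; under eq_fun do under eq_bigr do rewrite lamE.
rewrite lamE preimage_bigcup; apply: measure_sigma_additive.
  move=> k; rewrite -xsection_jump_preimage //.
  exact: measurable_xsection (measurable_jump_preimage i (XF k)).
by move=> k l _ _ [y [Fk Fl]]; apply: tF => //; exists (jump i x y).
Qed.

Lemma lam_inX (i : 'I_n) (x : Amb) : inX x -> lam eta x i inX = 1%E.
Proof.
move=> xX; rewrite lamE -(probability_setT eta); congr (eta _).
by apply/seteqP; split=> // y _; exact: inX_jump.
Qed.

Lemma measurable_mu (B : set Amb) : XBorel B ->
  measurable_fun (inX : set AmbX) (fun x => mu ta td eta x B).
Proof.
move=> XB; apply: emeasurable_sum => i.
apply: emeasurable_funM; last exact: measurable_lam.
exact: measurable_funS (measurable_fun_psi (fun psi => (rate ta td psi i)%:E)).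
Qed.

Lemma mu_sigma_additive (x : Amb) (F : (set Amb)^nat) :
  inX x -> (forall k, XBorel (F k)) -> trivIset setT F ->
  (fun m => \sum_(0 <= k < m) mu ta td eta x (F k))%E @ \oo -->
  mu ta td eta x (\bigcup_k F k).
Proof.
move=> xX XF tF; rewrite /mu.
have r0 i : (0 <= (rate ta td x.1 i)%:E)%E by rewrite lee_fin rate_ge0.
have -> : (fun m => \sum_(0 <= k < m) \sum_(i < n)
              (rate ta td x.1 i)%:E * lam eta x i (F k))%E =
    (fun m => \sum_(i < n)
              (rate ta td x.1 i)%:E * \sum_(0 <= k < m) lam eta x i (F k))%E.
  apply/funext => m; rewrite exchange_big /=; apply: eq_bigr => i _.
  by rewrite ge0_sume_distrr // => k _; exact: lam_ge0.
apply: cvg_nnesum => i _.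
  by apply: nearW => m; apply: mule_ge0 => //; apply: sume_ge0 => k _; exact: lam_ge0.
by apply: cvgeZl => //; exact: lam_sigma_additive.
Qed.

Lemma measurable_on_mu (B : set Amb) : XBorel B ->
  measurable_on inX XBorel (fun x => mu ta td eta x B).
Proof.
move=> XB A mA; have /measurable_AmbXE := measurable_mu XB measurable_inX mA.
by rewrite setIA setIid.
Qed.

Lemma probability_on_mu (x : Amb) : inX x ->
  probability_on inX XBorel (fun B => mu ta td eta x B).
Proof.
move=> xX; split.
- by rewrite /mu big1 // => i _; rewrite lamE preimage_set0 measure0 mule0.
- move=> A _; apply: sume_ge0 => i _.
  by apply: mule_ge0; [rewrite lee_fin rate_ge0|exact: lam_ge0].
- by move=> F; exact: mu_sigma_additive.
rewrite /mu (eq_bigr (fun i => (rate ta td x.1 i)%:E)) => [|i _].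
  by rewrite sumEFin sum_rate.
by rewrite lam_inX // mule1.
Qed.

End kernel.

End model.

Theorem proposition1 (R : realType) (n N : nat) (theta_a theta_d : R)
    (eta : probability (Eborel R N) R) :
  (0 < n)%N -> (0 < N)%N -> 0 < theta_a -> 0 < theta_d ->
  (\int[eta]_y (`|(y : 'rV[R]_N)|)%:E < +oo)%E ->
  (forall B : set (Amb R n N), @XBorel R n N B ->
     measurable_on (@inX R n N) (@XBorel R n N)
       (fun x => mu theta_a theta_d eta x B)) /\
  (forall x : Amb R n N, @inX R n N x ->
     probability_on (@inX R n N) (@XBorel R n N)
       (fun B => mu theta_a theta_d eta x B)).
Proof.
move=> n_gt0 _ ta_gt0 td_gt0 _; split=> [B|x]; first exact: measurable_on_mu.
exact: probability_on_mu.
Qed.
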